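(* Let $\Gamma$ be a connected countable graph and let $(B_n)_{n\in\mathbb N}$ satisfy $(\dagger)$. Let $u,v\in V(\Gamma)$ be distinct and let $P$ be a path with end-vertices $u$ and $v$ such that no vertex of $V(P)\setminus\{u,v\}$ is critical. Then no maximum matching misses both $u$ and $v$.
   Context: Condition $(\dagger)$ on $(B_n)_{n\in\mathbb N}$: each $B_n\subseteq V(\Gamma)$ is finite, $B_n\subseteq B_{n+1}$, $\bigcup_n B_n=V(\Gamma)$, and the subgraph induced on each $B_n$ is connected. A matching $M$ misses a vertex $x$ if no edge of $M$ contains $x$. The miss sequence of $M$ is $(m_n)_{n\in\mathbb N}$ with $m_n$ the number of vertices of $B_n$ missed by $M$. For matchings $M_1,M_2$ with miss sequences $(a_n),(b_n)$, write $M_1<M_2$ if there is $N$ with $a_n=b_n$ for all $n<N$ and $a_N>b_N$. A maximum matching is a matching $M$ for which no matching $M'$ satisfies $M<M'$. A vertex is critical if no maximum matching misses it. *)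

From mathcomp Require Import all_boot.
From mathcomp Require Import boolp.
Set Implicit Arguments. Unset Strict Implicit. Unset Printing Implicit Defensive.

Definition simple_graph (V : eqType) (adj : rel V) : Prop :=
  symmetric adj /\ irreflexive adj.

Definition connected_graph (V : eqType) (adj : rel V) : Prop :=
  forall x y : V, exists p : seq V, path adj x p /\ last x p = y.

(* Condition (dagger): finite sets B n (duplicate-free lists), nested,
   exhausting V, each inducing a connected subgraph. *)
Definition dagger (V : eqType) (adj : rel V) (B : nat -> seq V) : Prop :=
  [/\ forall n, uniq (B n),
      forall n, {subset B n <= B n.+1},
      forall x : V, exists n, x \in B n
    & forall n x y, x \in B n -> y \in B n ->
        exists p : seq V, [/\ path adj x p, last x p = y & all (mem (B n)) p]].

(* A matching: a set of edges (a symmetric relation contained in adj)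
   that are pairwise disjoint (each vertex in at most one edge). *)
Definition is_matching (V : eqType) (adj : rel V) (M : V -> V -> Prop) : Prop :=
  [/\ forall x y, M x y -> M y x,
      forall x y, M x y -> adj x y
    & forall x y z, M x y -> M x z -> y = z].

Definition misses (V : eqType) (M : V -> V -> Prop) (x : V) : Prop :=
  forall y, ~ M x y.

Definition miss_seq (V : eqType) (B : nat -> seq V) (M : V -> V -> Prop)
  (n : nat) : nat :=
  count (fun x => `[< misses M x >]) (B n).

Definition match_lt (V : eqType) (B : nat -> seq V) (M1 M2 : V -> V -> Prop) : Prop :=
  exists N, (forall n, n < N -> miss_seq B M1 n = miss_seq B M2 n)
            /\ miss_seq B M1 N > miss_seq B M2 N.

Definition maximum_matching (V : eqType) (adj : rel V) (B : nat -> seq V)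
  (M : V -> V -> Prop) : Prop :=
  is_matching adj M /\
  forall M', is_matching adj M' -> ~ match_lt B M M'.

Definition critical (V : eqType) (adj : rel V) (B : nat -> seq V) (x : V) : Prop :=
  forall M, maximum_matching adj B M -> ~ misses M x.

From mathcomp Require Import all_boot.
From mathcomp Require Import boolp.
From mathcomp Require Import zify.
Set Implicit Arguments. Unset Strict Implicit.

(* Suppose a maximum matching M misses both ends u, v of the path
   u = x_0, x_1, ..., x_m = v.  Since x_1 is not critical, some maximum matching
   M' misses x_1.  Let C be the set of vertices reachable from x_1 by a walk
   alternating between M-edges and M'-edges (starting with an M-edge); C is
   closed under both matchings, so taking M' on C and M off C gives a matching
   M2.  Counting missed vertices shows that M2 is again maximum (an exchange
   argument on the lexicographic order of miss sequences).  M2 misses x_1.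
   If u is not in C, M2 also misses u, contradicting maximality since u x_1 is
   an edge; otherwise v is not in C (an alternating walk stops at the first
   M-missed vertex it meets), so M2 misses x_1 and v, and we conclude by
   induction along the path. *)

Definition lex_improved (a b : nat -> nat) : Prop :=
  exists N, (forall n, n < N -> a n = b n) /\ a N > b N.

Lemma first_diff (f g : nat -> nat) : (exists n, f n <> g n) ->
  exists N, (forall n, n < N -> f n = g n) /\ f N <> g N.
Proof.
move=> H.
have H' : exists n, f n != g n by case: H => n Hn; exists n; apply/eqP.
exists (ex_minn H'); case: ex_minnP => m /eqP Hm Hmin; split => // n Hn.
apply/eqP; apply: contraTT Hn => Hne; rewrite -leqNgt; exact: Hmin.
Qed.

Lemma lex_improved_of_le (a b : nat -> nat) :
  (forall n, b n <= a n) -> (exists n, b n < a n) -> lex_improved a b.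
Proof.
move=> hle [n0 hn0].
have [N [heq hN]] : exists N, (forall n, n < N -> a n = b n) /\ a N <> b N.
  by apply: first_diff; exists n0; lia.
by exists N; split => //; have := hle N; lia.
Qed.

(* Exchange: if f + g = a + b pointwise, f is not below a and g is not below b,
   then f = a.  At a first difference of f and a, either f is below a or,
   by the sum identity, g is below b. *)
Lemma lex_exchange (a b f g : nat -> nat) :
  (forall n, f n + g n = a n + b n) ->
  ~ lex_improved a f -> ~ lex_improved b g -> forall n, f n = a n.
Proof.
move=> sum nfa ngb n0; apply: contrapT => hne0.
have [N [heq hN]] : exists N, (forall n, n < N -> f n = a n) /\ f N <> a N.
  by apply: first_diff; exists n0.
have [hlt|hgt] : f N < a N \/ a N < f N by lia.
- by apply: nfa; exists N; split => // n /heq ->.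
- apply: ngb; exists N; split; last by have := sum N; lia.
  by move=> n /heq; have := sum n; lia.
Qed.

Lemma count_add_eq (T : Type) (a b c d : pred T) (s : seq T) :
  (forall x, a x + b x = c x + d x) ->
  count a s + count b s = count c s + count d s.
Proof. by move=> H; elim: s => //= x s IH; have := H x; lia. Qed.

Lemma count_sub_lt (T : eqType) (a b : pred T) (s : seq T) y :
  subpred a b -> y \in s -> a y < b y -> count a s < count b s.
Proof.
move=> sub; elim: s => [|x s IH] //=; rewrite inE => /orP [/eqP <-|ys] hy.
- by have := sub_count sub s; lia.
- have := IH ys hy; case: (boolP (a x)) => [/sub -> //|_]; lia.
Qed.

Fixpoint alt_walk (V : Type) (M M' : V -> V -> Prop) (x : V) (k : nat) (z : V)
  : Prop :=
  match k with
  | 0 => z = x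
  | k'.+1 => exists y, alt_walk M M' x k' y /\ (if odd k' then M' y z else M y z)
  end.

Section AlternatingWalk.
Variables (V : eqType) (adj : rel V) (M M' : V -> V -> Prop) (x0 : V).
Hypotheses (HM : is_matching adj M) (HM' : is_matching adj M').

Definition alt_reach (z : V) : Prop := exists k, alt_walk M M' x0 k z.

(* In a matching each step is forced, so walks of a given length agree. *)
Lemma alt_walk_det k y z :
  alt_walk M M' x0 k y -> alt_walk M M' x0 k z -> y = z.
Proof.
case: HM HM' => [_ _ uM] [_ _ uM']; elim: k y z => [|k IH] y z /=.
  by move=> -> ->.
move=> [y1 [h1 e1]] [z1 [h2 e2]]; have E := IH _ _ h1 h2; subst z1.
by case: (odd k) e1 e2 => e1 e2; [exact: uM' e1 e2 | exact: uM e1 e2].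
Qed.

Lemma alt_walk_prefix j z i :
  alt_walk M M' x0 j z -> i <= j -> exists w, alt_walk M M' x0 i w.
Proof.
elim: j z => [|j IH] z; first by move=> _ /[!leqn0] /eqP ->; exists x0.
move=> H; rewrite leq_eqVlt => /orP [/eqP ->|hi]; first by exists z.
by case: H => y [hy _]; exact: IH hy hi.
Qed.

Lemma alt_reach_closedM x y : alt_reach x -> M x y -> alt_reach y.
Proof.
case: HM => [sM _ uM] [k hk] hxy; case hk2: (odd k); last first.
  by exists k.+1; exists x; rewrite hk2.
case: k hk hk2 => [|k] //= [w [hw e]] hk2.
move: e; rewrite (negbTE hk2) => /sM e.
by have E := uM _ _ _ e hxy; subst y; exists k.
Qed.

Lemma alt_reach_closedM' x y :
  misses M' x0 -> alt_reach x -> M' x y -> alt_reach y.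
Proof.
case: HM' => [sM' _ uM'] hx0 [k hk] hxy; case hk2: (odd k).
  by exists k.+1; exists x; rewrite hk2.
case: k hk hk2 => [|k] /=; first by move=> E; subst x; case: (hx0 y).
move=> [w [hw e]] /negbFE hk2; move: e; rewrite hk2 => /sM' e.
by have E := uM' _ _ _ e hxy; subst y; exists k.
Qed.

Lemma alt_walk_stops k x : alt_walk M M' x0 k x -> misses M x ->
  forall j z, k < j -> ~ alt_walk M M' x0 j z.
Proof.
move=> hk hx j z hkj hj; have [w [y [hy e]]] := alt_walk_prefix hj hkj.
have E := alt_walk_det hy hk; subst y; case hk2: (odd k) e => e; last exact: hx e.
case: HM => sM _ _; case: k hk hk2 {hkj hy} => [|k] //= [w' [_ e']] hk2.
by move: e'; rewrite (negbTE hk2) => /sM; apply: hx.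
Qed.

Lemma alt_reach_missed_unique a b :
  alt_reach a -> alt_reach b -> misses M a -> misses M b -> a = b.
Proof.
move=> [ka ha] [kb hb] ma mb.
case: (ltngtP ka kb) => hk.
- by case: (alt_walk_stops ha ma hk hb).
- by case: (alt_walk_stops hb mb hk ha).
- by subst kb; exact: alt_walk_det ha hb.
Qed.

End AlternatingWalk.

Definition glue (V : Type) (C : V -> Prop) (N1 N2 : V -> V -> Prop) (x y : V)
  : Prop :=
  (C x /\ N1 x y) \/ (~ C x /\ N2 x y).

Section Glue.
Variables (V : eqType) (adj : rel V) (C : V -> Prop).

Lemma glue_matching N1 N2 :
  is_matching adj N1 -> is_matching adj N2 ->
  (forall x y, C x -> N1 x y -> C y) -> (forall x y, C x -> N2 x y -> C y) ->
  is_matching adj (glue C N1 N2).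
Proof.
move=> [s1 a1 u1] [s2 a2 u2] c1 c2; split.
- move=> x y [[cx e]|[cx e]]; first by left; split; [exact: c1 cx e | exact: s1].
  by right; split => [cy|]; [apply: cx; exact: c2 cy (s2 _ _ e) | exact: s2].
- by move=> x y [[_ e]|[_ e]]; eauto.
- by move=> x y z [[cx e]|[cx e]] [[cx' e']|[cx' e']]; eauto.
Qed.

Lemma glue_misses_in N1 N2 x : C x -> misses (glue C N1 N2) x <-> misses N1 x.
Proof.
move=> cx; split => h y e; first by apply: (h y); left.
by case: e => [[_ e]|[]]; [exact: h y e | ].
Qed.

Lemma glue_misses_out N1 N2 x : ~ C x -> misses (glue C N1 N2) x <-> misses N2 x.
Proof.
move=> cx; split => h y e; first by apply: (h y); right.
by case: e => [[]|[_ e]]; [ | exact: h y e].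
Qed.

(* Each vertex is missed as often by the two gluings as by the two matchings. *)
Lemma glue_miss_seq_sum (B : nat -> seq V) N1 N2 n :
  miss_seq B (glue C N1 N2) n + miss_seq B (glue C N2 N1) n =
  miss_seq B N1 n + miss_seq B N2 n.
Proof.
apply: count_add_eq => x; case: (pselect (C x)) => cx.
- rewrite (asbool_equiv_eq (glue_misses_in N1 N2 cx)).
  by rewrite (asbool_equiv_eq (glue_misses_in N2 N1 cx)).
- rewrite (asbool_equiv_eq (glue_misses_out N1 N2 cx)).
  by rewrite (asbool_equiv_eq (glue_misses_out N2 N1 cx)) addnC.
Qed.

Lemma maximum_same_miss (B : nat -> seq V) (M M2 : V -> V -> Prop) :
  maximum_matching adj B M -> is_matching adj M2 ->
  (forall n, miss_seq B M2 n = miss_seq B M n) -> maximum_matching adj B M2.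
Proof.
move=> [_ hM] h2 he; split => // M' hM' [N [h1 h3]]; apply: (hM M' hM').
by exists N; split => [n hn|]; rewrite -he //; exact: h1.
Qed.

Lemma glue_maximum (B : nat -> seq V) (M M' : V -> V -> Prop) :
  maximum_matching adj B M -> maximum_matching adj B M' ->
  (forall x y, C x -> M x y -> C y) -> (forall x y, C x -> M' x y -> C y) ->
  maximum_matching adj B (glue C M' M).
Proof.
move=> HM HM' cM cM'.
have G1 := glue_matching (proj1 HM') (proj1 HM) cM' cM.
have G2 := glue_matching (proj1 HM) (proj1 HM') cM cM'.
apply: (maximum_same_miss HM G1).
apply: (lex_exchange (g := miss_seq B (glue C M M'))).
- by move=> n; rewrite glue_miss_seq_sum addnC.
- exact: (proj2 HM _ G1).
- exact: (proj2 HM' _ G2).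
Qed.

End Glue.

(* No edge has both ends missed by a maximum matching: adding it would
   decrease the miss sequence. *)
Lemma maximum_no_missed_edge (V : eqType) adj B (M : V -> V -> Prop) a b :
  simple_graph adj -> dagger adj B -> maximum_matching adj B M ->
  misses M a -> misses M b -> ~ adj a b.
Proof.
move=> [sym irr] [_ _ cov _] [[sM aM uM] hM] ma mb ab.
have hab : a <> b by move=> E; subst b; rewrite irr in ab.
pose M2 x y := M x y \/ (x = a /\ y = b) \/ (x = b /\ y = a).
have m2 : is_matching adj M2.
  split.
  - by move=> x y [e|[[-> ->]|[-> ->]]]; rewrite /M2; [left; exact: sM | auto | auto].
  - by move=> x y [e|[[-> ->]|[-> ->]]]; [exact: aM | | rewrite sym].
  - move=> x y z [e|[[E1 E2]|[E1 E2]]] [f|[[F1 F2]|[F1 F2]]]; subst => //;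
      by [exact: uM e f | case: (ma _ e) | case: (ma _ f) | case: (mb _ e) | case: (mb _ f)].
have sub : subpred (fun x => `[< misses M2 x >]) (fun x => `[< misses M x >]).
  by move=> x /asboolP h; apply/asboolP => y e; apply: (h y); left.
apply: (hM M2 m2); apply: lex_improved_of_le => [n|]; first exact: sub_count.
have [n0 hn0] := cov a; exists n0; apply: (count_sub_lt sub hn0).
by case: asboolP => [h|_]; [case: (h b); right; left | case: asboolP].
Qed.

Lemma noncritical_missed (V : eqType) adj B (x : V) :
  ~ critical adj B x -> exists M, maximum_matching adj B M /\ misses M x.
Proof.
move=> hx; apply: contrapT => hno; apply: hx => M HM mx.
by apply: hno; exists M.
Qed.

Lemma shift_missed_vertex (V : eqType) adj B (M : V -> V -> Prop) u v x :
  simple_graph adj -> dagger adj B -> maximum_matching adj B M ->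
  misses M u -> misses M v -> u != v -> adj u x -> ~ critical adj B x ->
  exists M2, [/\ maximum_matching adj B M2, misses M2 x & misses M2 v].
Proof.
move=> Hg HB HM mu mv Huv ux /noncritical_missed [M' [HM' mx]].
pose C := alt_reach M M' x.
have cM y z : C y -> M y z -> C z by exact: (@alt_reach_closedM _ _ M M' x (proj1 HM) y z).
have cM' y z : C y -> M' y z -> C z by exact: (@alt_reach_closedM' _ _ M M' x (proj1 HM') y z mx).
have HM2 := glue_maximum HM HM' cM cM'.
have Cx : C x by exists 0.
have m2x : misses (glue C M' M) x by apply/(glue_misses_in _ _ Cx).
case: (pselect (C u)) => Cu; last first.
  have m2u : misses (glue C M' M) u by apply/(glue_misses_out _ _ Cu).
  by case: (maximum_no_missed_edge Hg HB HM2 m2u m2x ux).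
have NCv : ~ C v.
  move=> Cv; move/eqP: Huv; apply.
  exact: (alt_reach_missed_unique (proj1 HM) (proj1 HM') Cu Cv mu mv).
by exists (glue C M' M); split => //; apply/(glue_misses_out _ _ NCv).
Qed.

Theorem lemmaA4 (V : countType) (adj : rel V) (B : nat -> seq V)
  (Hg : simple_graph adj) (Hconn : connected_graph adj) (HB : dagger adj B)
  (u v : V) (Huv : u != v) (p : seq V)
  (Hpath : path adj u p) (Hlast : last u p = v) (Huniq : uniq (u :: p))
  (Hnc : forall x, x \in u :: p -> x != u -> x != v -> ~ critical adj B x) :
  forall M, maximum_matching adj B M -> ~ (misses M u /\ misses M v).
Proof.
elim: p u Huv Hpath Hlast Huniq Hnc => [|x p IH] u Huv Hpath Hlast Huniq Hnc M HM [mu mv].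
  by move: Huv; rewrite -Hlast eqxx.
move: Hpath Huniq => /= /andP [ux Hpath] /andP [/norP [Hux Hup] Huniq].
case: (eqVneq x v) => [Exv|Hxv].
  by subst x; exact: (maximum_no_missed_edge Hg HB HM mu mv ux).
have Hncx : ~ critical adj B x by apply: Hnc; rewrite ?inE ?eqxx ?orbT // eq_sym.
have [M2 [HM2 m2x m2v]] := shift_missed_vertex Hg HB HM mu mv Huv ux Hncx.
apply: (IH x Hxv Hpath Hlast Huniq _ M2 HM2 (conj m2x m2v)) => y hy hyx hyv.
apply: Hnc => //; first by rewrite inE hy orbT.
by apply: contraNneq Hup => <-; move: hy; rewrite inE (negbTE hyx).
Qed.
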